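(* Let $\Omega_1,\Omega_2$ be finite sets and $(\Omega_1^k\times\Omega_2^k,\mu)$ a probability space such that the marginal of $\mu$ on any pair of coordinates, one from the $\Omega_1^k$ part and one from the $\Omega_2^k$ part, is a product distribution. Let $\mu_1,\mu_2$ be the marginals of $\mu$ on $\Omega_1^k$ and $\Omega_2^k$. Let $X,Y$ be random $k\times L$ matrices (entries in $\Omega_1$, resp. $\Omega_2$) chosen so that independently for each $i\in[L]$ the pair of $i$-th columns $(x^i,y^i)\in\Omega_1^k\times\Omega_2^k$ is drawn from $\mu$; let $x_j\in\Omega_1^L$, $y_j\in\Omega_2^L$ denote the $j$-th rows. Let $F:\Omega_1^L\to[-1,1]$ and $G:\Omega_2^L\to[-1,1]$ and set $$\tau:=\sqrt{\sum_{i\in[L]}\mathrm{Inf}_i[F]\,\mathrm{Inf}_i[G]},\qquad \Gamma:=\max\Big\{\sqrt{\textstyle\sum_{i\in[L]}\mathrm{Inf}_i[F]},\ \sqrt{\textstyle\sum_{i\in[L]}\mathrm{Inf}_i[G]}\Big\}.$$ Then $$\Big|\mathbb{E}_{(X,Y)\sim\mu^{\otimes L}}\Big[\prod_{j\in[k]}F(x_j)G(y_j)\Big]-\mathbb{E}_{X\sim\mu_1^{\otimes L}}\Big[\prod_{j\in[k]}F(x_j)\Big]\,\mathbb{E}_{Y\sim\mu_2^{\otimes L}}\Big[\prod_{j\in[k]}G(y_j)\Big]\Big|\le 2^{O(k)}\,\Gamma\,\tau,$$ where the $O(\cdot)$ hides an absolute constant.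
   Context: Influences of $F:\Omega_1^L\to\mathbb{R}$ are taken with respect to the product measure on $\Omega_1^L$ whose coordinate marginals are the single-coordinate marginals of $\mu_1$ (and similarly for $G$ with $\mu_2$): $\mathrm{Inf}_i[F]:=\mathbb{E}_{x_{-i}}\mathrm{Var}_{x_i}[F(x_1,\dots,x_L)]$, equivalently $\sum_{\beta\ni i}\|F_\beta\|_2^2$ for the Efron–Stein decomposition $F=\sum_{\beta\subseteq[L]}F_\beta$. In $X\sim\mu_1^{\otimes L}$ the columns of $X$ are independent samples from $\mu_1$ (and similarly for $Y$). *)

From HB Require Import structures.
From mathcomp Require Import all_boot all_order all_algebra.
From mathcomp Require Import reals.
Set Implicit Arguments. Unset Strict Implicit. Unset Printing Implicit Defensive.
Import Order.TTheory GRing.Theory Num.Theory.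
Local Open Scope ring_scope.

Section Defs.
Variable R : realType.

Definition is_distr (T : finType) (p : T -> R) :=
  (forall t, 0 <= p t) /\ \sum_t p t = 1.

Variables (k L : nat) (O1 O2 : finType).

(* columns: elements of O1^k, O2^k *)
Notation C1 := {ffun 'I_k -> O1}.
Notation C2 := {ffun 'I_k -> O2}.

Definition marg1 (mu : C1 * C2 -> R) (x : C1) : R := \sum_(y : C2) mu (x, y).
Definition marg2 (mu : C1 * C2 -> R) (y : C2) : R := \sum_(x : C1) mu (x, y).

Definition pairwise_product (mu : C1 * C2 -> R) :=
  forall (a b : 'I_k) (u : O1) (v : O2),
    \sum_(z : C1 * C2 | (z.1 a == u) && (z.2 b == v)) mu z =
    (\sum_(z : C1 * C2 | z.1 a == u) mu z) * (\sum_(z : C1 * C2 | z.2 b == v) mu z).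

Definition coord_marg1 (mu : C1 * C2 -> R) (pi1 : O1 -> R) :=
  forall (a : 'I_k) (u : O1), \sum_(z : C1 * C2 | z.1 a == u) mu z = pi1 u.
Definition coord_marg2 (mu : C1 * C2 -> R) (pi2 : O2 -> R) :=
  forall (b : 'I_k) (v : O2), \sum_(z : C1 * C2 | z.2 b == v) mu z = pi2 v.

Definition row1 (c : {ffun 'I_L -> C1 * C2}) (j : 'I_k) : {ffun 'I_L -> O1} :=
  [ffun i => (c i).1 j].
Definition row2 (c : {ffun 'I_L -> C1 * C2}) (j : 'I_k) : {ffun 'I_L -> O2} :=
  [ffun i => (c i).2 j].
Definition rowX (X : {ffun 'I_L -> C1}) (j : 'I_k) : {ffun 'I_L -> O1} :=
  [ffun i => X i j].
Definition rowY (Y : {ffun 'I_L -> C2}) (j : 'I_k) : {ffun 'I_L -> O2} :=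
  [ffun i => Y i j].

Definition E_joint (mu : C1 * C2 -> R)
    (F : {ffun 'I_L -> O1} -> R) (G : {ffun 'I_L -> O2} -> R) : R :=
  \sum_(c : {ffun 'I_L -> C1 * C2})
     (\prod_(i < L) mu (c i)) * \prod_(j < k) (F (row1 c j) * G (row2 c j)).

Definition E_1 (mu : C1 * C2 -> R) (F : {ffun 'I_L -> O1} -> R) : R :=
  \sum_(X : {ffun 'I_L -> C1})
     (\prod_(i < L) marg1 mu (X i)) * \prod_(j < k) F (rowX X j).
Definition E_2 (mu : C1 * C2 -> R) (G : {ffun 'I_L -> O2} -> R) : R :=
  \sum_(Y : {ffun 'I_L -> C2})
     (\prod_(i < L) marg2 mu (Y i)) * \prod_(j < k) G (rowY Y j).
End Defs.

Section Influence.
Variable R : realType.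
Variables (L : nat) (O : finType).

Definition upd (x : {ffun 'I_L -> O}) (i : 'I_L) (a : O) : {ffun 'I_L -> O} :=
  [ffun j => if j == i then a else x j].

(* Inf_i[F] = E_{x ~ pi^{(x)L}} [ (F x - E_{a ~ pi} F(x with x_i := a))^2 ]
            = E_{x_{-i}} Var_{x_i} F *)
Definition Inf (pi : O -> R) (F : {ffun 'I_L -> O} -> R) (i : 'I_L) : R :=
  \sum_(x : {ffun 'I_L -> O}) (\prod_(l < L) pi (x l)) *
     (F x - \sum_(a : O) pi a * F (upd x i a)) ^+ 2.
End Influence.

(* Hybrid argument: replace the columns of (X, Y) one at a time by columns drawn
   from mu1 x mu2.  Both column laws are pairwise independent across the two blocks
   and have the same two marginals.  When column t is exchanged, write
   F(x_j) = m_j + d_j, where d_j is the deviation of F from its average over the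
   t-th coordinate, and likewise G(y_j) = n_j + e_j.  In the expansion of
   prod_j F(x_j) G(y_j), the terms of order zero in the d's or in the e's have an
   expectation fixed by the marginals, and the product of the two first-order
   parts has expectation zero by pairwise independence; the rest is bounded by
   D E (D + E) with D = sum_j |d_j| and E = sum_j |e_j|.  Cauchy-Schwarz and
   pairwise independence bound its expectation by
   k^3 sqrt(Inf_t F Inf_t G) sqrt(2 (Inf_t F + Inf_t G)), and a last Cauchy-Schwarz
   over t gives 4 k^3 Gamma tau <= 2^(5k) Gamma tau. *)

From Pilot Require Import Defs.
From HB Require Import structures.
From mathcomp Require Import all_boot all_order all_algebra.
From mathcomp Require Import reals.
From mathcomp Require Import ring lra.
Import Order.TTheory GRing.Theory Num.Theory.
Local Open Scope ring_scope.
Set Implicit Arguments. Unset Strict Implicit. Unset Printing Implicit Defensive.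

Section CauchySchwarz.
Variables (R : rcfType) (I : finType) (w : I -> R).
Hypothesis w_ge0 : forall i, 0 <= w i.

Lemma cauchy_schwarz_sqr (a b : I -> R) :
  (\sum_i w i * a i * b i) ^+ 2 <= (\sum_i w i * a i ^+ 2) * (\sum_i w i * b i ^+ 2).
Proof.
set A := \sum_i w i * a i ^+ 2; set B := \sum_i w i * b i ^+ 2.
set X := \sum_i w i * a i * b i.
(* Lagrange's identity: 2 (A B - X^2) is a sum of weighted squares. *)
have lagrange : \sum_i \sum_j w i * w j * (a i * b j - a j * b i) ^+ 2 =
    2 * (A * B - X ^+ 2).
  have AB : A * B = \sum_i \sum_j w i * a i ^+ 2 * (w j * b j ^+ 2).
    by rewrite mulr_suml; apply: eq_bigr => i _; rewrite mulr_sumr.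
  have BA : A * B = \sum_i \sum_j w j * a j ^+ 2 * (w i * b i ^+ 2).
    by rewrite exchange_big /= mulr_suml; apply: eq_bigr => i _; rewrite mulr_sumr.
  have XX : X ^+ 2 = \sum_i \sum_j w i * a i * b i * (w j * a j * b j).
    by rewrite expr2 mulr_suml; apply: eq_bigr => i _; rewrite mulr_sumr.
  have -> : 2 * (A * B - X ^+ 2) = A * B + A * B - 2 * X ^+ 2 by ring.
  rewrite {1}BA AB XX mulr_sumr -big_split -sumrB.
  apply: eq_bigr => i _ /=.
  rewrite mulr_sumr -big_split -sumrB; apply: eq_bigr => j _ /=; ring.
have : 0 <= \sum_i \sum_j w i * w j * (a i * b j - a j * b i) ^+ 2.
  apply: sumr_ge0 => i _; apply: sumr_ge0 => j _.
  by rewrite mulr_ge0 ?sqr_ge0 // mulr_ge0.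
rewrite lagrange; lra.
Qed.

Lemma cauchy_schwarz (a b : I -> R) :
  \sum_i w i * a i * b i <=
    Num.sqrt (\sum_i w i * a i ^+ 2) * Num.sqrt (\sum_i w i * b i ^+ 2).
Proof.
have A_ge0 : 0 <= \sum_i w i * a i ^+ 2 by apply: sumr_ge0 => i _; rewrite mulr_ge0 ?sqr_ge0.
rewrite -sqrtrM // (le_trans (ler_norm _)) // -sqrtr_sqr.
exact/ler_wsqrtr/cauchy_schwarz_sqr.
Qed.
End CauchySchwarz.

Lemma sqr_sum_norm_le (R : rcfType) (I : finType) (x : I -> R) :
  (\sum_i `|x i|) ^+ 2 <= #|I|%:R * \sum_i x i ^+ 2.
Proof.
have -> : \sum_i `|x i| = \sum_i 1 * 1 * `|x i| by apply: eq_bigr => i _; rewrite !mul1r.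
apply: le_trans (cauchy_schwarz_sqr (fun _ => ler01) _ _) _.
under [X in X * _ <= _]eq_bigr do rewrite expr1n mulr1.
under [X in _ * X <= _]eq_bigr do rewrite mul1r (real_normK (num_real _)).
by rewrite sumr_const.
Qed.

Section PerturbedProducts.
Variables (R : realDomainType) (I : Type) (m d : I -> R).
Hypotheses (m_le1 : forall i, `|m i| <= 1) (md_le1 : forall i, `|m i + d i| <= 1).

(* The part of [\prod_(i <- s) (m i + d i)] that is linear in the [d i]. *)
Fixpoint lin_part (s : seq I) : R :=
  if s is j :: s' then d j * \prod_(i <- s') m i + m j * lin_part s' else 0.

Lemma norm_prod_le1 (h : I -> R) s :
  (forall i, `|h i| <= 1) -> `|\prod_(i <- s) h i| <= 1.
Proof.
move=> h_le1; elim: s => [|j s IH]; first by rewrite big_nil normr1.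
by rewrite big_cons normrM; have := h_le1 j; have := normr_ge0 (h j); nra.
Qed.

Lemma norm_prodD_sub_prod_le s :
  `|\prod_(i <- s) (m i + d i) - \prod_(i <- s) m i| <= \sum_(i <- s) `|d i|.
Proof.
elim: s => [|j s IH]; first by rewrite !big_nil subrr normr0.
rewrite !big_cons.
set A := \prod_(i <- s) _; set B := \prod_(i <- s) _.
have -> : (m j + d j) * A - m j * B = m j * (A - B) + d j * A by ring.
apply: le_trans (ler_normD _ _) _; rewrite !normrM.
have := norm_prod_le1 s md_le1; have := m_le1 j.
have := normr_ge0 (m j); have := normr_ge0 (d j); have := normr_ge0 A.
have := normr_ge0 (A - B); nra.
Qed.

Lemma norm_lin_part_le s : `|lin_part s| <= \sum_(i <- s) `|d i|.
Proof.
elim: s => [|j s IH] /=; first by rewrite big_nil normr0.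
rewrite big_cons; apply: le_trans (ler_normD _ _) _; rewrite !normrM.
have := norm_prod_le1 s m_le1; have := m_le1 j.
have := normr_ge0 (m j); have := normr_ge0 (d j);
have := normr_ge0 (\prod_(i <- s) m i); have := normr_ge0 (lin_part s); nra.
Qed.

Lemma norm_prodD_sub_lin_le s :
  `|\prod_(i <- s) (m i + d i) - \prod_(i <- s) m i - lin_part s|
    <= (\sum_(i <- s) `|d i|) ^+ 2.
Proof.
elim: s => [|j s IH] /=; first by rewrite !big_nil subrr subr0 normr0 expr0n.
rewrite !big_cons.
set A := \prod_(i <- s) _; set B := \prod_(i <- s) _; set S := \sum_(i <- s) _.
have -> : (m j + d j) * A - m j * B - (d j * B + m j * lin_part s) =
    m j * (A - B - lin_part s) + d j * (A - B) by ring.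
apply: le_trans (ler_normD _ _) _; rewrite !normrM.
have S_ge0 : 0 <= S by rewrite sumr_ge0.
have := norm_prodD_sub_prod_le s; rewrite -/A -/B -/S => AB_le.
have h1 : `|m j| * `|A - B - lin_part s| <= S ^+ 2.
  by apply: le_trans IH; rewrite ler_piMl ?m_le1.
have h2 : `|d j| * `|A - B| <= `|d j| * S by rewrite ler_wpM2l.
have := normr_ge0 (d j); nra.
Qed.
End PerturbedProducts.

Lemma sum_mul_fibers (R : comNzRingType) (T A B : finType) (nu : T -> R)
    (h1 : T -> A) (h2 : T -> B) (phi : A -> R) (psi : B -> R) :
  \sum_t nu t * (phi (h1 t) * psi (h2 t)) =
  \sum_a \sum_b phi a * psi b * \sum_(t | (h1 t == a) && (h2 t == b)) nu t.
Proof.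
transitivity (\sum_t \sum_a \sum_b
    (if (h1 t == a) && (h2 t == b) then nu t * (phi (h1 t) * psi (h2 t)) else 0)).
  apply: eq_bigr => t _; rewrite pair_bigA /= -big_mkcond /=.
  rewrite (big_pred1 (h1 t, h2 t)) // => -[a b] /=.
  by rewrite xpair_eqE (eq_sym a) (eq_sym b).
rewrite exchange_big /=; apply: eq_bigr => a _; rewrite exchange_big /=.
apply: eq_bigr => b _; rewrite [in RHS]big_mkcond mulr_sumr; apply: eq_bigr => t _.
by case: (h1 t =P a) => [<-|] /=; case: (h2 t =P b) => [<-|] /=; rewrite ?mulr0 // mulrC.
Qed.

Section PairIndep.
Variables (R : realType) (k : nat) (O1 O2 : finType) (pi1 : O1 -> R) (pi2 : O2 -> R).
Notation C1 := {ffun 'I_k -> O1}.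
Notation C2 := {ffun 'I_k -> O2}.
Notation W := (C1 * C2)%type.

(* Satisfied both by [mu] and by the product of its two marginals. *)
Definition pair_indep (nu : W -> R) := (forall w, 0 <= nu w) /\
  forall a b u v, \sum_(w : W | (w.1 a == u) && (w.2 b == v)) nu w = pi1 u * pi2 v.

Lemma pair_indep_mul nu a b (phi : O1 -> R) (psi : O2 -> R) : pair_indep nu ->
  \sum_(w : W) nu w * (phi (w.1 a) * psi (w.2 b)) =
  (\sum_u pi1 u * phi u) * (\sum_v pi2 v * psi v).
Proof.
case=> _ nu_pair; rewrite (sum_mul_fibers nu (fun w : W => w.1 a) (fun w : W => w.2 b)).
rewrite mulr_suml; apply: eq_bigr => u _; rewrite mulr_sumr; apply: eq_bigr => v _.
by rewrite nu_pair; ring.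
Qed.

Lemma lin_part_orth nu (m1 : 'I_k -> R) (d1 : 'I_k -> O1 -> R)
    (m2 : 'I_k -> R) (d2 : 'I_k -> O2 -> R) (s1 s2 : seq 'I_k) :
  pair_indep nu ->
  (forall j, \sum_u pi1 u * d1 j u = 0) -> (forall j, \sum_v pi2 v * d2 j v = 0) ->
  \sum_w nu w * (lin_part m1 (fun j => d1 j (w.1 j)) s1 *
                 lin_part m2 (fun j => d2 j (w.2 j)) s2) = 0.
Proof.
move=> nu_indep d1_mean0 d2_mean0.
have sum_lin (x y : W -> R) (c c' : R) :
    \sum_w nu w * (c * x w + c' * y w) = c * \sum_w nu w * x w + c' * \sum_w nu w * y w.
  by rewrite !mulr_sumr -big_split; apply: eq_bigr => w _ /=; ring.
have d1_l2 j :
    \sum_w nu w * (d1 j (w.1 j) * lin_part m2 (fun j => d2 j (w.2 j)) s2) = 0.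
  elim: s2 => [|b s2 IH] /=; first by apply: big1 => w _; rewrite !mulr0.
  rewrite (eq_bigr (fun w => nu w * (\prod_(i <- s2) m2 i * (d1 j (w.1 j) * d2 b (w.2 b))
      + m2 b * (d1 j (w.1 j) * lin_part m2 (fun j => d2 j (w.2 j)) s2)))); last first.
    by move=> w _; congr (_ * _); ring.
  by rewrite sum_lin IH pair_indep_mul // d1_mean0 !mul0r !mulr0 addr0.
elim: s1 => [|a s1 IH] /=; first by apply: big1 => w _; rewrite mul0r mulr0.
rewrite (eq_bigr (fun w => nu w *
    (\prod_(i <- s1) m1 i * (d1 a (w.1 a) * lin_part m2 (fun j => d2 j (w.2 j)) s2)
     + m1 a * (lin_part m1 (fun j => d1 j (w.1 j)) s1 *
               lin_part m2 (fun j => d2 j (w.2 j)) s2)))); last first.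
  by move=> w _; congr (_ * _); ring.
by rewrite sum_lin IH d1_l2 !mulr0 addr0.
Qed.
End PairIndep.

Section Distr.
Variables (R : realType) (T : finType) (pi : T -> R).
Hypothesis pi_distr : is_distr pi.

Lemma norm_expect_le1 (h : T -> R) :
  (forall t, `|h t| <= 1) -> `|\sum_t pi t * h t| <= 1.
Proof.
case: pi_distr => pi_ge0 pi_sum1 h_le1; apply: le_trans (ler_norm_sum _ _ _) _.
rewrite -pi_sum1; apply: ler_sum => t _.
by rewrite normrM ger0_norm // ler_piMr.
Qed.

Lemma expect_centered (h : T -> R) : \sum_t pi t * (h t - \sum_s pi s * h s) = 0.
Proof.
case: pi_distr => _ pi_sum1.
rewrite (eq_bigr (fun t => pi t * h t - (\sum_s pi s * h s) * pi t)) => [|t _]; last by ring.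
by rewrite sumrB -mulr_sumr pi_sum1 mulr1 subrr.
Qed.
End Distr.

Section ColumnExchange.
Variables (R : realType) (k : nat) (O1 O2 : finType) (pi1 : O1 -> R) (pi2 : O2 -> R).
Notation C1 := {ffun 'I_k -> O1}.
Notation C2 := {ffun 'I_k -> O2}.
Notation W := (C1 * C2)%type.
Variables (f : 'I_k -> O1 -> R) (g : 'I_k -> O2 -> R).
Hypotheses (pi1_distr : is_distr pi1) (pi2_distr : is_distr pi2).
Hypotheses (f_le1 : forall j u, `|f j u| <= 1) (g_le1 : forall j v, `|g j v| <= 1).

Definition mean1 j := \sum_u pi1 u * f j u.
Definition mean2 j := \sum_v pi2 v * g j v.
Definition dev1 j u := f j u - mean1 j.
Definition dev2 j v := g j v - mean2 j.
Definition prod1 (w : W) := \prod_(j < k) f j (w.1 j).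
Definition prod2 (w : W) := \prod_(j < k) g j (w.2 j).
Definition lin1 (w : W) := lin_part mean1 (fun j => dev1 j (w.1 j)) (index_enum 'I_k).
Definition lin2 (w : W) := lin_part mean2 (fun j => dev2 j (w.2 j)) (index_enum 'I_k).
Definition dev_sum1 (w : W) := \sum_(j < k) `|dev1 j (w.1 j)|.
Definition dev_sum2 (w : W) := \sum_(j < k) `|dev2 j (w.2 j)|.

(* The terms subtracted from [prod1 w * prod2 w] have an expectation that depends
   on the law of [w] only through its two marginals ([lin1 w * lin2 w] has
   expectation zero under pairwise independence). *)
Definition remainder (w : W) :=
  prod1 w * prod2 w - lin1 w * lin2 w - prod1 w * \prod_(j < k) mean2 j
  - \prod_(j < k) mean1 j * prod2 w + \prod_(j < k) mean1 j * \prod_(j < k) mean2 j.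

Lemma norm_remainder_le w :
  `|remainder w| <= dev_sum1 w * dev_sum2 w * (dev_sum1 w + dev_sum2 w).
Proof.
have mean1_le1 j : `|mean1 j| <= 1 by exact: norm_expect_le1.
have mean2_le1 j : `|mean2 j| <= 1 by exact: norm_expect_le1.
have fD j : `|mean1 j + dev1 j (w.1 j)| <= 1 by rewrite addrC subrK.
have gD j : `|mean2 j + dev2 j (w.2 j)| <= 1 by rewrite addrC subrK.
have prod1E : prod1 w = \prod_(j < k) (mean1 j + dev1 j (w.1 j)).
  by apply: eq_bigr => j _; rewrite addrC subrK.
have prod2E : prod2 w = \prod_(j < k) (mean2 j + dev2 j (w.2 j)).
  by apply: eq_bigr => j _; rewrite addrC subrK.
set M1 := \prod_(j < k) mean1 j; set M2 := \prod_(j < k) mean2 j.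
have -> : remainder w = (prod1 w - M1) * (prod2 w - M2 - lin2 w)
                        + (prod1 w - M1 - lin1 w) * lin2 w by rewrite /remainder -/M1 -/M2; ring.
have a1 : `|prod1 w - M1| <= dev_sum1 w by rewrite prod1E norm_prodD_sub_prod_le.
have a2 : `|prod2 w - M2 - lin2 w| <= dev_sum2 w ^+ 2.
  by rewrite prod2E norm_prodD_sub_lin_le.
have a3 : `|prod1 w - M1 - lin1 w| <= dev_sum1 w ^+ 2.
  by rewrite prod1E norm_prodD_sub_lin_le.
have a4 : `|lin2 w| <= dev_sum2 w by exact: norm_lin_part_le.
have s1 : 0 <= dev_sum1 w by rewrite sumr_ge0.
have s2 : 0 <= dev_sum2 w by rewrite sumr_ge0.
apply: le_trans (ler_normD _ _) _; rewrite !normrM.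
have := normr_ge0 (prod1 w - M1); have := normr_ge0 (lin2 w).
have := normr_ge0 (prod2 w - M2 - lin2 w); have := normr_ge0 (prod1 w - M1 - lin1 w).
nra.
Qed.

Lemma expect_prod_sub_remainder nu : pair_indep pi1 pi2 nu ->
  \sum_w nu w * (prod1 w * prod2 w) - \sum_w nu w * remainder w =
  \prod_(j < k) mean2 j * \sum_w nu w * prod1 w
  + \prod_(j < k) mean1 j * \sum_w nu w * prod2 w
  - \prod_(j < k) mean1 j * \prod_(j < k) mean2 j * \sum_(w : W) nu w.
Proof.
move=> nu_indep.
have lin_orth : \sum_w nu w * (lin1 w * lin2 w) = 0.
  apply: (lin_part_orth _ _ _ _ nu_indep) => j; exact: expect_centered.
rewrite -sumrB (eq_bigr (fun w => nu w * (lin1 w * lin2 w) +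
    (\prod_(j < k) mean2 j * (nu w * prod1 w) + (\prod_(j < k) mean1 j * (nu w * prod2 w)
     - \prod_(j < k) mean1 j * \prod_(j < k) mean2 j * nu w)))); last first.
  by move=> w _; rewrite /remainder; ring.
by rewrite !big_split /= sumrN -!mulr_sumr lin_orth add0r addrA.
Qed.

Lemma column_exchange_le nu nu' : pair_indep pi1 pi2 nu -> pair_indep pi1 pi2 nu' ->
  (forall phi : C1 -> R, \sum_w nu w * phi w.1 = \sum_w nu' w * phi w.1) ->
  (forall phi : C2 -> R, \sum_w nu w * phi w.2 = \sum_w nu' w * phi w.2) ->
  `|\sum_w (nu w - nu' w) * \prod_(j < k) (f j (w.1 j) * g j (w.2 j))|
    <= \sum_w (nu w + nu' w) * (dev_sum1 w * dev_sum2 w * (dev_sum1 w + dev_sum2 w)).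
Proof.
move=> nu_indep nu'_indep same1 same2.
have same_prod1 : \sum_w nu w * prod1 w = \sum_w nu' w * prod1 w :=
  same1 (fun x => \prod_(j < k) f j (x j)).
have same_prod2 : \sum_w nu w * prod2 w = \sum_w nu' w * prod2 w :=
  same2 (fun y => \prod_(j < k) g j (y j)).
have same_mass : \sum_(w : W) nu w = \sum_w nu' w.
  by have /= := same1 (fun _ => 1); rewrite -!mulr_suml !mulr1.
have -> : \sum_w (nu w - nu' w) * \prod_(j < k) (f j (w.1 j) * g j (w.2 j)) =
    \sum_w nu w * remainder w - \sum_w nu' w * remainder w.
  rewrite (eq_bigr (fun w => nu w * (prod1 w * prod2 w) - nu' w * (prod1 w * prod2 w)));
    last by move=> w _; rewrite big_split /= mulrBl.
  have := expect_prod_sub_remainder nu_indep; have := expect_prod_sub_remainder nu'_indep.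
  rewrite sumrB same_prod1 same_prod2 same_mass; lra.
rewrite -sumrB; apply: le_trans (ler_norm_sum _ _ _) _; apply: ler_sum => w _.
case: nu_indep => /(_ w) nu_ge0 _; case: nu'_indep => /(_ w) nu'_ge0 _.
rewrite -mulrBl normrM; apply: ler_pM => //; last exact: norm_remainder_le.
by apply: le_trans (ler_normB _ _) _; rewrite !ger0_norm.
Qed.
End ColumnExchange.

Lemma prod_indicator (R : comNzRingType) (I : finType) (P : pred I) :
  \prod_i ((P i)%:R : R) = ([forall i, P i])%:R.
Proof.
case: (boolP [forall i, P i]) => [/forallP allP | ].
  by rewrite big1 // => i _; rewrite allP.
by rewrite negb_forall => /existsP [i Pi]; rewrite (bigD1 i) //= (negbTE Pi) mul0r.
Qed.

Lemma sum_prod_distr (R : realType) (I O : finType) (pi : O -> R) :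
  is_distr pi -> \sum_(y : {ffun I -> O}) \prod_l pi (y l) = 1.
Proof.
case=> _ pi_sum1; rewrite -(bigA_distr_bigA (fun (_ : I) (v : O) => pi v)) /=.
by rewrite big1.
Qed.

Lemma Inf_ge0 (R : realType) (L : nat) (O : finType) (pi : O -> R)
    (H : {ffun 'I_L -> O} -> R) t :
  is_distr pi -> 0 <= Inf pi H t.
Proof.
case=> pi_ge0 _; apply: sumr_ge0 => x _.
by rewrite mulr_ge0 ?sqr_ge0 // prodr_ge0.
Qed.

Section ProductLaw.
Variables (R : realType) (k L : nat) (O1 O2 : finType).
Notation C1 := {ffun 'I_k -> O1}.
Notation C2 := {ffun 'I_k -> O2}.
Notation W := (C1 * C2)%type.
Notation Cfg := {ffun 'I_L -> W}.
Implicit Types (c : Cfg) (t : 'I_L) (w : W) (nu : 'I_L -> W -> R).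

Definition set_col c t w : Cfg := [ffun i => if i == t then w else c i].

Definition Eprod nu (K : Cfg -> R) := \sum_(c : Cfg) (\prod_i nu i (c i)) * K c.

Definition rest_weight nu t c := \prod_(i | i != t) nu i (c i).

Lemma set_col_at c t w : set_col c t w t = w.
Proof. by rewrite ffunE eqxx. Qed.

Lemma set_col_ne c t w i : i != t -> set_col c t w i = c i.
Proof. by rewrite ffunE => /negbTE ->. Qed.

Lemma set_col_set_col c t w w' : set_col (set_col c t w) t w' = set_col c t w'.
Proof. by apply/ffunP => i; rewrite !ffunE; case: eqP. Qed.

Lemma set_col_id c t : set_col c t (c t) = c.
Proof. by apply/ffunP => i; rewrite !ffunE; case: eqP => // ->. Qed.

Lemma rest_weight_set_col nu t c w : rest_weight nu t (set_col c t w) = rest_weight nu t c.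
Proof. by apply: eq_bigr => i; rewrite /= => /set_col_ne ->. Qed.

Lemma Eprod_split_col nu t w0 K : Eprod nu K =
  \sum_(c : Cfg | c t == w0) rest_weight nu t c * \sum_w nu t w * K (set_col c t w).
Proof.
pose term c := (\prod_i nu i (c i)) * K c.
have termE c w : rest_weight nu t c * (nu t w * K (set_col c t w)) = term (set_col c t w).
  rewrite /term (bigD1 t) //= set_col_at -(rest_weight_set_col nu t c w) /rest_weight; ring.
under eq_bigr do rewrite mulr_sumr; under eq_bigr do under eq_bigr do rewrite termE.
rewrite exchange_big /= /Eprod (partition_big (fun c : Cfg => c t) xpredT) //=.
apply: eq_bigr => w _.
rewrite (reindex_onto (fun c => set_col c t w) (fun c => set_col c t w0)); last first.
  by move=> c /eqP <-; rewrite set_col_set_col set_col_id.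
apply: eq_bigl => c; rewrite set_col_at eqxx set_col_set_col.
by apply/eqP/eqP => [<-|<-]; rewrite ?set_col_at ?set_col_id.
Qed.

Lemma rest_weight_eq nu nu' t :
  (forall i, i != t -> nu i = nu' i) -> rest_weight nu t =1 rest_weight nu' t.
Proof. by move=> nu_nu' c; apply: eq_bigr => i /nu_nu' ->. Qed.

Lemma ler_Eprod nu (X Y : Cfg -> R) : (forall i w, 0 <= nu i w) ->
  (forall c, X c <= Y c) -> Eprod nu X <= Eprod nu Y.
Proof.
move=> nu_ge0 XY; apply: ler_sum => c _.
by rewrite ler_wpM2l // prodr_ge0.
Qed.

Lemma Eprod_sum (I : finType) nu (X : I -> Cfg -> R) :
  Eprod nu (fun c => \sum_i X i c) = \sum_i Eprod nu (X i).
Proof. by rewrite /Eprod exchange_big; apply: eq_bigr => c _; rewrite mulr_sumr. Qed.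

Lemma EprodZ nu a (X : Cfg -> R) : Eprod nu (fun c => a * X c) = a * Eprod nu X.
Proof. by rewrite /Eprod mulr_sumr; apply: eq_bigr => c _; rewrite mulrCA. Qed.

Lemma EprodD nu (X Y : Cfg -> R) :
  Eprod nu (fun c => X c + Y c) = Eprod nu X + Eprod nu Y.
Proof. by rewrite /Eprod -big_split; apply: eq_bigr => c _; rewrite mulrDr. Qed.

Lemma Eprod_cauchy_schwarz nu (X Y : Cfg -> R) : (forall i w, 0 <= nu i w) ->
  Eprod nu (fun c => X c * Y c) <=
    Num.sqrt (Eprod nu (fun c => X c ^+ 2)) * Num.sqrt (Eprod nu (fun c => Y c ^+ 2)).
Proof.
move=> nu_ge0; rewrite /Eprod; under eq_bigr do rewrite mulrA.
by apply: cauchy_schwarz => c; rewrite prodr_ge0.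
Qed.

Variables (pi1 : O1 -> R) (pi2 : O2 -> R).

Lemma Eprod_rows_indep nu a b (phi : {ffun 'I_L -> O1} -> R) (psi : {ffun 'I_L -> O2} -> R) :
  (forall i, pair_indep pi1 pi2 (nu i)) ->
  Eprod nu (fun c => phi (Defs.row1 c a) * psi (Defs.row2 c b)) =
  (\sum_(x : {ffun 'I_L -> O1}) (\prod_l pi1 (x l)) * phi x) *
  (\sum_(y : {ffun 'I_L -> O2}) (\prod_l pi2 (y l)) * psi y).
Proof.
move=> nu_indep; rewrite /Eprod (sum_mul_fibers (fun c : Cfg => \prod_i nu i (c i))
  (fun c : Cfg => Defs.row1 c a) (fun c : Cfg => Defs.row2 c b)).
rewrite mulr_suml; apply: eq_bigr => x _; rewrite mulr_sumr; apply: eq_bigr => y _.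
suff -> : \sum_(c : Cfg | (Defs.row1 c a == x) && (Defs.row2 c b == y)) \prod_i nu i (c i) =
    \prod_i (pi1 (x i) * pi2 (y i)) by rewrite big_split /=; ring.
pose ind i w := ((w.1 a == x i) && (w.2 b == y i))%:R : R.
rewrite big_mkcond /= (eq_bigr (fun c => \prod_i (nu i (c i) * ind i (c i)))); last first.
  move=> c _; rewrite big_split /= prod_indicator.
  have -> : [forall i, ((c i).1 a == x i) && ((c i).2 b == y i)] =
      (Defs.row1 c a == x) && (Defs.row2 c b == y).
    apply/forallP/andP => [rows_eq | [/eqP <- /eqP <-] i]; last by rewrite !ffunE !eqxx.
    by split; apply/eqP/ffunP => i; rewrite ffunE; case/andP: (rows_eq i) => /eqP e1 /eqP e2; rewrite ?e1 ?e2.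
  by case: ifP; rewrite ?mulr1 ?mulr0.
rewrite -(bigA_distr_bigA (fun i w => nu i w * ind i w)) /=; apply: eq_bigr => i _.
case: (nu_indep i) => _ nu_pair; rewrite -(nu_pair a b) [RHS]big_mkcond /=; apply: eq_bigr => w _.
by rewrite /ind; case: ifP; rewrite ?mulr1 ?mulr0.
Qed.

Hypotheses (pi1_distr : is_distr pi1) (pi2_distr : is_distr pi2).
Variables (F : {ffun 'I_L -> O1} -> R) (G : {ffun 'I_L -> O2} -> R).

Definition row_dev1 t c j := F (Defs.row1 c j) - \sum_u pi1 u * F (upd (Defs.row1 c j) t u).
Definition row_dev2 t c j := G (Defs.row2 c j) - \sum_v pi2 v * G (upd (Defs.row2 c j) t v).
Definition row_dev_sum1 t c := \sum_(j < k) `|row_dev1 t c j|.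
Definition row_dev_sum2 t c := \sum_(j < k) `|row_dev2 t c j|.
Definition prod_rows c := \prod_(j < k) (F (Defs.row1 c j) * G (Defs.row2 c j)).
Definition row_remainder_bound t c :=
  row_dev_sum1 t c * row_dev_sum2 t c * (row_dev_sum1 t c + row_dev_sum2 t c).

Section Moments.
Variables (nu : 'I_L -> W -> R) (t : 'I_L).
Hypothesis nu_indep : forall i, pair_indep pi1 pi2 (nu i).

Lemma Eprod_row_dev1_sqr a : Eprod nu (fun c => row_dev1 t c a ^+ 2) = Inf pi1 F t.
Proof.
have := Eprod_rows_indep a a (fun x => (F x - \sum_u pi1 u * F (upd x t u)) ^+ 2)
  (fun _ => 1) nu_indep.
under [in X in _ = _ * X -> _]eq_bigr do rewrite mulr1.
rewrite sum_prod_distr // mulr1 /Inf => <-.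
by apply: eq_bigr => c _; rewrite mulr1.
Qed.

Lemma Eprod_row_dev2_sqr b : Eprod nu (fun c => row_dev2 t c b ^+ 2) = Inf pi2 G t.
Proof.
have := Eprod_rows_indep b b (fun _ => 1)
  (fun y => (G y - \sum_v pi2 v * G (upd y t v)) ^+ 2) nu_indep.
under [in X in _ = X * _ -> _]eq_bigr do rewrite mulr1.
rewrite sum_prod_distr // mul1r /Inf => <-.
by apply: eq_bigr => c _; rewrite mul1r.
Qed.

Lemma Eprod_row_dev_sqr_mul a b :
  Eprod nu (fun c => row_dev1 t c a ^+ 2 * row_dev2 t c b ^+ 2) = Inf pi1 F t * Inf pi2 G t.
Proof.
exact: (Eprod_rows_indep a b (fun x => (F x - \sum_u pi1 u * F (upd x t u)) ^+ 2)
   (fun y => (G y - \sum_v pi2 v * G (upd y t v)) ^+ 2) nu_indep).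
Qed.

Let nu_ge0 i w : 0 <= nu i w. Proof. by case: (nu_indep i). Qed.

Lemma Eprod_row_dev_sum_mul_sqr_le :
  Eprod nu (fun c => (row_dev_sum1 t c * row_dev_sum2 t c) ^+ 2)
    <= (k%:R ^+ 2) ^+ 2 * (Inf pi1 F t * Inf pi2 G t).
Proof.
have -> : (k%:R ^+ 2) ^+ 2 * (Inf pi1 F t * Inf pi2 G t) = Eprod nu (fun c =>
    k%:R ^+ 2 * \sum_(a < k) \sum_(b < k) row_dev1 t c a ^+ 2 * row_dev2 t c b ^+ 2).
  rewrite EprodZ Eprod_sum.
  under eq_bigr do rewrite Eprod_sum; under eq_bigr do under eq_bigr do
    rewrite Eprod_row_dev_sqr_mul.
  by rewrite !sumr_const !card_ord; ring.
apply: ler_Eprod => // c.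
have := sqr_sum_norm_le (row_dev1 t c); have := sqr_sum_norm_le (row_dev2 t c).
rewrite card_ord -/(row_dev_sum1 t c) -/(row_dev_sum2 t c) => le2 le1.
have -> : \sum_(a < k) \sum_(b < k) row_dev1 t c a ^+ 2 * row_dev2 t c b ^+ 2 =
    (\sum_(a < k) row_dev1 t c a ^+ 2) * \sum_(b < k) row_dev2 t c b ^+ 2.
  by rewrite mulr_suml; apply: eq_bigr => a _; rewrite mulr_sumr.
rewrite exprMn (_ : forall x y, k%:R ^+ 2 * (x * y) = k%:R * x * (k%:R * y)) => [|x y]; last by ring.
by apply: ler_pM; rewrite ?sqr_ge0.
Qed.

Lemma Eprod_row_dev_sum_add_sqr_le :
  Eprod nu (fun c => (row_dev_sum1 t c + row_dev_sum2 t c) ^+ 2)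
    <= k%:R ^+ 2 * (2 * (Inf pi1 F t + Inf pi2 G t)).
Proof.
have Eprod_sum_sqr1 : Eprod nu (fun c => \sum_(a < k) row_dev1 t c a ^+ 2) = k%:R * Inf pi1 F t.
  by rewrite Eprod_sum; under eq_bigr do rewrite Eprod_row_dev1_sqr;
     rewrite sumr_const card_ord mulr_natl.
have Eprod_sum_sqr2 : Eprod nu (fun c => \sum_(b < k) row_dev2 t c b ^+ 2) = k%:R * Inf pi2 G t.
  by rewrite Eprod_sum; under eq_bigr do rewrite Eprod_row_dev2_sqr;
     rewrite sumr_const card_ord mulr_natl.
have -> : k%:R ^+ 2 * (2 * (Inf pi1 F t + Inf pi2 G t)) = Eprod nu (fun c =>
    2 * k%:R * \sum_(a < k) row_dev1 t c a ^+ 2 + 2 * k%:R * \sum_(b < k) row_dev2 t c b ^+ 2).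
  by rewrite EprodD !EprodZ Eprod_sum_sqr1 Eprod_sum_sqr2; ring.
apply: ler_Eprod => // c.
have := sqr_sum_norm_le (row_dev1 t c); have := sqr_sum_norm_le (row_dev2 t c).
rewrite card_ord -/(row_dev_sum1 t c) -/(row_dev_sum2 t c) -!mulrA.
rewrite (_ : (row_dev_sum1 t c + row_dev_sum2 t c) ^+ 2 = 2 * row_dev_sum1 t c ^+ 2
  + 2 * row_dev_sum2 t c ^+ 2 - (row_dev_sum1 t c - row_dev_sum2 t c) ^+ 2); last by ring.
have := sqr_ge0 (row_dev_sum1 t c - row_dev_sum2 t c).
set q := (_ - _) ^+ 2; set A := k%:R * _; set B := k%:R * _; lra.
Qed.

Lemma Eprod_row_remainder_le :
  Eprod nu (row_remainder_bound t)
    <= k%:R ^+ 3 * (Num.sqrt (Inf pi1 F t * Inf pi2 G t) *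
                    Num.sqrt (2 * (Inf pi1 F t + Inf pi2 G t))).
Proof.
have k_ge0 : 0 <= k%:R :> R by rewrite ler0n.
have sqrt_sqrM (x y : R) : 0 <= x -> Num.sqrt (x ^+ 2 * y) = x * Num.sqrt y.
  by move=> x_ge0; rewrite sqrtrM ?sqr_ge0 // sqrtr_sqr ger0_norm.
apply: le_trans (Eprod_cauchy_schwarz _ _ nu_ge0) _.
rewrite (_ : k%:R ^+ 3 * _ =
    Num.sqrt ((k%:R ^+ 2) ^+ 2 * (Inf pi1 F t * Inf pi2 G t)) *
    Num.sqrt (k%:R ^+ 2 * (2 * (Inf pi1 F t + Inf pi2 G t)))); last first.
  by rewrite !sqrt_sqrM ?exprn_ge0 //; ring.
apply: ler_pM; rewrite ?sqrtr_ge0 //; apply: ler_wsqrtr.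
  exact: Eprod_row_dev_sum_mul_sqr_le.
exact: Eprod_row_dev_sum_add_sqr_le.
Qed.
End Moments.

Lemma row1_set_col c t w j : Defs.row1 (set_col c t w) j = upd (Defs.row1 c j) t (w.1 j).
Proof. by apply/ffunP => i; rewrite !ffunE; case: eqP. Qed.

Lemma row2_set_col c t w j : Defs.row2 (set_col c t w) j = upd (Defs.row2 c j) t (w.2 j).
Proof. by apply/ffunP => i; rewrite !ffunE; case: eqP. Qed.

Lemma upd_upd (O : finType) (x : {ffun 'I_L -> O}) t a b : upd (upd x t a) t b = upd x t b.
Proof. by apply/ffunP => i; rewrite !ffunE; case: eqP. Qed.

Hypotheses (F_le1 : forall x, `|F x| <= 1) (G_le1 : forall y, `|G y| <= 1).

Lemma Eprod_exchange_col_le nu nu' t w0 :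
  (forall i, i != t -> nu i = nu' i) ->
  (forall i, pair_indep pi1 pi2 (nu i)) -> (forall i, pair_indep pi1 pi2 (nu' i)) ->
  (forall phi : C1 -> R, \sum_w nu t w * phi w.1 = \sum_w nu' t w * phi w.1) ->
  (forall phi : C2 -> R, \sum_w nu t w * phi w.2 = \sum_w nu' t w * phi w.2) ->
  `|Eprod nu prod_rows - Eprod nu' prod_rows| <=
    Eprod nu (row_remainder_bound t) + Eprod nu' (row_remainder_bound t).
Proof.
move=> nu_nu' nu_indep nu'_indep same1 same2.
rewrite !(Eprod_split_col _ t w0) -sumrB -big_split /=.
apply: le_trans (ler_norm_sum _ _ _) _; apply: ler_sum => c _.
have rest_ge0 : 0 <= rest_weight nu t c.
  by apply: prodr_ge0 => i _; case: (nu_indep i).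
rewrite -(rest_weight_eq nu_nu') -mulrBr -mulrDr normrM ger0_norm //.
apply: ler_wpM2l => //.
pose f j u := F (upd (Defs.row1 c j) t u).
pose g j v := G (upd (Defs.row2 c j) t v).
have prod_rowsE w : prod_rows (set_col c t w) = \prod_(j < k) (f j (w.1 j) * g j (w.2 j)).
  by apply: eq_bigr => j _; rewrite row1_set_col row2_set_col.
have boundE w : row_remainder_bound t (set_col c t w) =
    dev_sum1 pi1 f w * dev_sum2 pi2 g w * (dev_sum1 pi1 f w + dev_sum2 pi2 g w).
  rewrite /row_remainder_bound /dev_sum1 /dev_sum2 /dev1 /dev2 /mean1 /mean2.
  by congr (_ * _ * (_ + _)); apply: eq_bigr => j _;
     rewrite /row_dev1 /row_dev2 ?row1_set_col ?row2_set_col; under eq_bigr do rewrite upd_upd.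
rewrite -sumrB -big_split /=.
under eq_bigr do rewrite -mulrBl prod_rowsE.
under [X in _ <= X]eq_bigr do rewrite -mulrDl boundE.
exact: (column_exchange_le pi1_distr pi2_distr (f := f) (g := g)
  (fun _ _ => F_le1 _) (fun _ _ => G_le1 _) (nu_indep t) (nu'_indep t) same1 same2).
Qed.
End ProductLaw.

Lemma sum_sqrt_mul_le (R : rcfType) (I : finType) (a b : I -> R) :
  (forall i, 0 <= a i) -> (forall i, 0 <= b i) ->
  \sum_i Num.sqrt (a i * b i) * Num.sqrt (2 * (a i + b i)) <=
    2 * Num.max (Num.sqrt (\sum_i a i)) (Num.sqrt (\sum_i b i)) *
    Num.sqrt (\sum_i a i * b i).
Proof.
move=> a_ge0 b_ge0; set A := \sum_i a i; set B := \sum_i b i.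
set Gam := Num.max _ _.
have := cauchy_schwarz (fun _ => ler01) (fun i => Num.sqrt (a i * b i))
  (fun i => Num.sqrt (2 * (a i + b i))).
under eq_bigr do rewrite mul1r; under [X in _ <= Num.sqrt X * _]eq_bigr do
  rewrite mul1r sqr_sqrtr ?mulr_ge0 //.
under [X in _ <= _ * Num.sqrt X]eq_bigr do rewrite mul1r sqr_sqrtr ?mulr_ge0 ?addr_ge0 //.
move/le_trans; apply; rewrite mulrC; apply: ler_wpM2r; first exact: sqrtr_ge0.
have A_le : Num.sqrt A <= Gam by rewrite le_max lexx.
have B_le : Num.sqrt B <= Gam by rewrite le_max lexx orbT.
have Gam_ge0 : 0 <= Gam by apply: le_trans A_le; apply: sqrtr_ge0.
rewrite -(ger0_norm (_ : 0 <= 2 * Gam)) ?mulr_ge0 // -sqrtr_sqr; apply: ler_wsqrtr.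
rewrite -mulr_sumr big_split /= -/A -/B.
have A_ge0 : 0 <= A by rewrite sumr_ge0.
have B_ge0 : 0 <= B by rewrite sumr_ge0.
have := sqrtr_ge0 A; have := sqrtr_ge0 B; have := sqr_sqrtr A_ge0; have := sqr_sqrtr B_ge0.
nra.
Qed.

Lemma sum_pair (V : nmodType) (A B : finType) (h : A * B -> V) :
  \sum_w h w = \sum_a \sum_b h (a, b).
Proof. by rewrite pair_bigA; apply: eq_bigr => -[]. Qed.

Section Hybrid.
Variables (R : realType) (k L : nat) (O1 O2 : finType).
Notation C1 := {ffun 'I_k -> O1}.
Notation C2 := {ffun 'I_k -> O2}.
Notation W := (C1 * C2)%type.
Notation Cfg := {ffun 'I_L -> W}.
Variables (mu : W -> R) (pi1 : O1 -> R) (pi2 : O2 -> R).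
Hypotheses (mu_distr : is_distr mu) (mu_pair : pairwise_product mu)
  (pi1_distr : is_distr pi1) (pi2_distr : is_distr pi2)
  (mu_marg1 : coord_marg1 mu pi1) (mu_marg2 : coord_marg2 mu pi2).

Definition marg_prod (w : W) : R := marg1 mu w.1 * marg2 mu w.2.

Definition hybrid (t : nat) (i : 'I_L) : W -> R := if (t <= i)%N then mu else marg_prod.

Lemma sum_marg1 : \sum_x marg1 mu x = 1.
Proof. by case: mu_distr => _ <-; rewrite sum_pair. Qed.

Lemma sum_marg2 : \sum_y marg2 mu y = 1.
Proof. by case: mu_distr => _ <-; rewrite sum_pair exchange_big. Qed.

Lemma mu_pair_indep : pair_indep pi1 pi2 mu.
Proof. by split=> [|a b u v]; [case: mu_distr | rewrite mu_pair mu_marg1 mu_marg2]. Qed.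

Lemma marg_prod_pair_indep : pair_indep pi1 pi2 marg_prod.
Proof.
case: mu_distr => mu_ge0 _.
split=> [w|a b u v]; first by rewrite mulr_ge0 // sumr_ge0.
have marg1E : \sum_(x : C1 | x a == u) marg1 mu x = pi1 u.
  rewrite -(mu_marg1 a u) /marg1 pair_big_dep /=.
  by apply: eq_big => [[x y] /=|[x y]]; rewrite ?andbT.
have marg2E : \sum_(y : C2 | y b == v) marg2 mu y = pi2 v.
  rewrite -(mu_marg2 b v) /marg2 exchange_big pair_big_dep /=.
  by apply: eq_big => -[].
rewrite -marg1E -marg2E mulr_suml.
rewrite (eq_bigr (fun x => \sum_(y : C2 | y b == v) marg1 mu x * marg2 mu y)) => [|x _].
  by rewrite pair_big_dep.
by rewrite mulr_sumr.
Qed.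

Lemma marg_prod_same1 (phi : C1 -> R) :
  \sum_w mu w * phi w.1 = \sum_w marg_prod w * phi w.1.
Proof.
rewrite !sum_pair; apply: eq_bigr => x _ /=.
rewrite [RHS](eq_bigr (fun y => marg2 mu y * (marg1 mu x * phi x))) => [|y _]; last first.
  by rewrite /marg_prod /=; ring.
by rewrite -!mulr_suml sum_marg2 mul1r.
Qed.

Lemma marg_prod_same2 (phi : C2 -> R) :
  \sum_w mu w * phi w.2 = \sum_w marg_prod w * phi w.2.
Proof.
rewrite !sum_pair exchange_big [RHS]exchange_big; apply: eq_bigr => y _ /=.
rewrite [RHS](eq_bigr (fun x => marg1 mu x * (marg2 mu y * phi y))) => [|x _]; last first.
  by rewrite /marg_prod /=; ring.
by rewrite -!mulr_suml sum_marg1 mul1r.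
Qed.

Lemma hybrid_pair_indep t i : pair_indep pi1 pi2 (hybrid t i).
Proof. by rewrite /hybrid; case: ifP => _; [exact: mu_pair_indep | exact: marg_prod_pair_indep]. Qed.

Variables (F : {ffun 'I_L -> O1} -> R) (G : {ffun 'I_L -> O2} -> R).
Hypotheses (F_le1 : forall x, `|F x| <= 1) (G_le1 : forall y, `|G y| <= 1).

Lemma E_joint_hybrid : E_joint mu F G = Eprod (hybrid 0) (prod_rows F G).
Proof. by apply: eq_bigr. Qed.

Lemma E_1_mul_E_2_hybrid : E_1 mu F * E_2 mu G = Eprod (hybrid L) (prod_rows F G).
Proof.
pose zip (XY : {ffun 'I_L -> C1} * {ffun 'I_L -> C2}) : Cfg := [ffun i => (XY.1 i, XY.2 i)].
have zip_bij : bijective zip.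
  exists (fun c : Cfg => ([ffun i => (c i).1], [ffun i => (c i).2])).
    by move=> [X Y]; congr (_, _); apply/ffunP => i; rewrite !ffunE.
  by move=> c; apply/ffunP => i; rewrite !ffunE /=; case: (c i).
rewrite /E_1 /E_2 mulr_suml.
under eq_bigr do rewrite mulr_sumr.
rewrite pair_bigA /Eprod (reindex zip (onW_bij _ zip_bij)) /=.
apply: eq_bigr => -[X Y] _ /=.
have hybridL i : hybrid L i = marg_prod by rewrite /hybrid leqNgt ltn_ord.
rewrite [in RHS](eq_bigr (fun i => marg1 mu (X i) * marg2 mu (Y i))) => [|i _]; last first.
  by rewrite hybridL /marg_prod !ffunE.
rewrite big_split /= /prod_rows big_split /=.
rewrite mulrACA; congr (_ * (_ * _)); apply: eq_bigr => j _; [congr F | congr G];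
  by apply/ffunP => i; rewrite !ffunE.
Qed.

Lemma E_joint_sub_E_1_mul_E_2 : E_joint mu F G - E_1 mu F * E_2 mu G =
  \sum_(t < L) (Eprod (hybrid t) (prod_rows F G) - Eprod (hybrid t.+1) (prod_rows F G)).
Proof.
rewrite E_joint_hybrid E_1_mul_E_2_hybrid.
rewrite -(big_mkord xpredT (fun t => Eprod (hybrid t) _ - Eprod (hybrid t.+1) _)).
rewrite -opprB -(telescope_sumr (fun t => Eprod (hybrid t) (prod_rows F G)) (leq0n L)).
by rewrite -sumrN; apply: eq_bigr => t _; rewrite opprB.
Qed.

Lemma hybrid_step_le (t : 'I_L) (w0 : W) :
  `|Eprod (hybrid t) (prod_rows F G) - Eprod (hybrid t.+1) (prod_rows F G)| <=
    2 * k%:R ^+ 3 * (Num.sqrt (Inf pi1 F t * Inf pi2 G t) *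
                     Num.sqrt (2 * (Inf pi1 F t + Inf pi2 G t))).
Proof.
have hybrid_ne i : i != t -> hybrid t i = hybrid t.+1 i.
  by move=> i_ne_t; rewrite /hybrid ltn_neqAle eq_sym i_ne_t.
have hybrid_t : hybrid t t = mu by rewrite /hybrid leqnn.
have hybrid_t1 : hybrid t.+1 t = marg_prod by rewrite /hybrid ltnn.
apply: le_trans (Eprod_exchange_col_le pi1_distr pi2_distr F_le1 G_le1 w0 hybrid_ne
  (hybrid_pair_indep t) (hybrid_pair_indep t.+1) _ _) _.
- by rewrite hybrid_t hybrid_t1; exact: marg_prod_same1.
- by rewrite hybrid_t hybrid_t1; exact: marg_prod_same2.
have := Eprod_row_remainder_le pi1_distr pi2_distr F G t (hybrid_pair_indep t).
have := Eprod_row_remainder_le pi1_distr pi2_distr F G t (hybrid_pair_indep t.+1).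
lra.
Qed.

Lemma E_joint_sub_E_1_mul_E_2_le :
  `|E_joint mu F G - E_1 mu F * E_2 mu G| <=
    (4 * k ^ 3)%:R * Num.max (Num.sqrt (\sum_(i < L) Inf pi1 F i))
                             (Num.sqrt (\sum_(i < L) Inf pi2 G i)) *
    Num.sqrt (\sum_(i < L) Inf pi1 F i * Inf pi2 G i).
Proof.
have [w0 _ | W_empty] := pickP (fun _ : W => true); last first.
  by case: mu_distr => _; rewrite big_pred0 // => /eqP; rewrite eq_sym oner_eq0.
rewrite E_joint_sub_E_1_mul_E_2; apply: le_trans (ler_norm_sum _ _ _) _.
apply: le_trans (ler_sum _ (fun t _ => hybrid_step_le t w0)) _.
set Gamma := Num.max _ _; set tau := Num.sqrt _.
rewrite -mulr_sumr (_ : _ * Gamma * tau = 2 * k%:R ^+ 3 * (2 * Gamma * tau));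
  last by rewrite natrM natrX; ring.
rewrite ler_wpM2l ?mulr_ge0 ?exprn_ge0 ?ler0n //.
by apply: sum_sqrt_mul_le => t; apply: Inf_ge0.
Qed.
End Hybrid.

Lemma four_mul_cube_leq_exp k : (4 * k ^ 3 <= 2 ^ (5 * k))%N.
Proof.
case: k => [|n] //.
rewrite (_ : 5 * n.+1 = 2 * n.+1 + n.+1 * 3)%N; last by rewrite (mulnC n.+1 3) -mulnDl.
rewrite expnD !expnM; apply: leq_mul.
  by rewrite expnS leq_pmulr // expn_gt0.
by rewrite leq_exp2r // ltnW // ltn_expl.
Qed.

Theorem theorem2p8 :
  exists C : nat,
  forall (R : realType) (k L : nat) (O1 O2 : finType)
    (mu : {ffun 'I_k -> O1} * {ffun 'I_k -> O2} -> R)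
    (pi1 : O1 -> R) (pi2 : O2 -> R)
    (F : {ffun 'I_L -> O1} -> R) (G : {ffun 'I_L -> O2} -> R),
    is_distr mu ->
    pairwise_product mu ->
    is_distr pi1 -> is_distr pi2 ->
    coord_marg1 mu pi1 -> coord_marg2 mu pi2 ->
    (forall x, `|F x| <= 1) -> (forall y, `|G y| <= 1) ->
    let tau := Num.sqrt (\sum_(i < L) Inf pi1 F i * Inf pi2 G i) in
    let Gamma := Num.max (Num.sqrt (\sum_(i < L) Inf pi1 F i))
                         (Num.sqrt (\sum_(i < L) Inf pi2 G i)) in
    `|E_joint mu F G - E_1 mu F * E_2 mu G| <=
      (2 ^ (C * k))%:R * Gamma * tau.
Proof.
exists 5%N => R k L O1 O2 mu pi1 pi2 F G mu_distr mu_pair pi1_distr pi2_distr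
  mu_marg1 mu_marg2 F_le1 G_le1; cbv zeta.
apply: le_trans (E_joint_sub_E_1_mul_E_2_le mu_distr mu_pair pi1_distr pi2_distr
  mu_marg1 mu_marg2 F_le1 G_le1) _.
by rewrite !ler_wpM2r ?le_max ?sqrtr_ge0 // ler_nat four_mul_cube_leq_exp.
Qed.
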